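(* Let $k$ be a symmetric positive semidefinite kernel on $\mathbb{R}^d$, $\sigma_n^2>0$, and let $\mathbb{D}_N^x=\{\bm{x}^{(i)}\}_{i=1}^N$ be an input training data set with GP posterior variance $\sigma_N^2(\cdot)$. For $\bm{x}\in\mathbb{R}^d$ and $\rho>0$ let $\mathbb{B}_\rho(\bm{x})=\{\bm{x}'\in\mathbb{D}_N^x:\|\bm{x}'-\bm{x}\|\le\rho\}$ and suppose $|\mathbb{B}_\rho(\bm{x})|\ge1$. Then $$\sigma_N^2(\bm{x})\le\frac{k(\bm{x},\bm{x})\sigma_n^2+|\mathbb{B}_\rho(\bm{x})|\,\xi(\bm{x},\rho)}{|\mathbb{B}_\rho(\bm{x})|\max_{\bm{x}',\bm{x}''\in\mathbb{B}_\rho(\bm{x})}k(\bm{x}',\bm{x}'')+\sigma_n^2},$$ where $\xi(\bm{x},\rho)=k(\bm{x},\bm{x})\max_{\bm{x}',\bm{x}''\in\mathbb{B}_\rho(\bm{x})}k(\bm{x}',\bm{x}'')-\min_{\bm{x}'\in\mathbb{B}_\rho(\bm{x})}k(\bm{x}',\bm{x})^2$.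
   Context: Gaussian process posterior variance: with $K_{N,ij}=k(\bm{x}^{(i)},\bm{x}^{(j)})$, $k_{N,i}(\bm{x})=k(\bm{x},\bm{x}^{(i)})$, $\bm{A}_N=\bm{K}_N+\sigma_n^2\bm{I}_N$, $\sigma_N^2(\bm{x})=k(\bm{x},\bm{x})-\bm{k}_N(\bm{x})^T\bm{A}_N^{-1}\bm{k}_N(\bm{x})$. $|\cdot|$ denotes cardinality (counted with multiplicity). *)

(* real closed field R (generalizes the reals; statement is algebraic). *)
From HB Require Import structures.
From mathcomp Require Import all_boot all_order all_algebra.
Set Implicit Arguments. Unset Strict Implicit. Unset Printing Implicit Defensive.
Import Order.TTheory GRing.Theory Num.Theory.
Local Open Scope ring_scope.

Section Defs.
Variables (R : rcfType) (d : nat).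
Notation pt := 'rV[R]_d.

Definition eucl_norm (v : pt) : R := Num.sqrt (\sum_(j < d) (v 0 j) ^+ 2).

Definition kernel_symmetric (k : pt -> pt -> R) : Prop := forall x y, k x y = k y x.

Definition gram (k : pt -> pt -> R) (m : nat) (X : 'I_m -> pt) : 'M[R]_m :=
  \matrix_(i < m, j < m) k (X i) (X j).

Definition kernel_psd (k : pt -> pt -> R) : Prop :=
  forall (m : nat) (X : 'I_m -> pt) (c : 'cV[R]_m),
    0 <= (c^T *m gram k X *m c) 0 0.

Definition kvec (k : pt -> pt -> R) (N : nat) (X : 'I_N -> pt) (x : pt) : 'cV[R]_N :=
  \col_(i < N) k x (X i).

Definition post_var (k : pt -> pt -> R) (sn2 : R) (N : nat) (X : 'I_N -> pt) (x : pt) : R :=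
  k x x - ((kvec k X x)^T *m invmx (gram k X + sn2%:M) *m kvec k X x) 0 0.

(* B_rho(x) as a set of indices (so cardinality counts multiplicity) *)
Definition ball_idx (N : nat) (X : 'I_N -> pt) (x : pt) (rho : R) : {set 'I_N} :=
  [set i | eucl_norm (X i - x) <= rho].

(* max / min of a nonempty finite list (head as seed, which is in the list) *)
Definition seq_max (s : seq R) : R := \big[Num.max/head 0 s]_(v <- s) v.
Definition seq_min (s : seq R) : R := \big[Num.min/head 0 s]_(v <- s) v.

Definition ball_kmax (k : pt -> pt -> R) (N : nat) (X : 'I_N -> pt) (x : pt) (rho : R) : R :=
  seq_max [seq k (X i) (X j) | i <- enum (ball_idx X x rho), j <- enum (ball_idx X x rho)].

Definition ball_kmin_sq (k : pt -> pt -> R) (N : nat) (X : 'I_N -> pt) (x : pt) (rho : R) : R :=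
  seq_min [seq (k (X i) x) ^+ 2 | i <- enum (ball_idx X x rho)].

Definition xi (k : pt -> pt -> R) (N : nat) (X : 'I_N -> pt) (x : pt) (rho : R) : R :=
  k x x * ball_kmax k X x rho - ball_kmin_sq k X x rho.

End Defs.

From HB Require Import structures.
From mathcomp Require Import all_boot all_order all_algebra.
From mathcomp Require Import ring lra.
Set Implicit Arguments. Unset Strict Implicit. Unset Printing Implicit Defensive.
Import Order.TTheory GRing.Theory Num.Theory.
Local Open Scope ring_scope.

(* The posterior variance is [k(x,x) - b^T A^-1 b] with [b = k_N(x)] and
   [A = K_N + sn2 I], and [b^T A^-1 b >= 2 c^T b - c^T A c] for every [c].
   Take for [c] a multiple [t] of the sign pattern of [b] on the ball: then
   [c^T b >= t |B| m] with [m^2] the minimum of [k(x',x)^2] over the ball, and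
   [c^T A c <= t^2 |B| (|B| kmax + sn2)], since every Gram entry over the ball
   is bounded in absolute value by its maximum [kmax].  The best [t] gives
   [b^T A^-1 b >= |B| m^2 / (|B| kmax + sn2)], which rearranges into the bound. *)

Section QuadraticForms.
Variables (R : realFieldType) (n : nat).
Implicit Types (A G : 'M[R]_n) (b c y : 'cV[R]_n).

Definition psdmx A := forall y, 0 <= (y^T *m A *m y) 0 0.

Lemma dotmxE b c : (c^T *m b) 0 0 = \sum_i c i 0 * b i 0.
Proof. by rewrite mxE; apply: eq_bigr => i _; rewrite mxE. Qed.

Lemma dotmxC b c : (b^T *m c) 0 0 = (c^T *m b) 0 0.
Proof. by rewrite !dotmxE; apply: eq_bigr => i _; rewrite mulrC. Qed.

Lemma quadmxE A c : (c^T *m A *m c) 0 0 = \sum_j \sum_i c i 0 * A i j * c j 0.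
Proof.
rewrite mxE; apply: eq_bigr => j _; rewrite mxE big_distrl /=.
by apply: eq_bigr => i _; rewrite mxE.
Qed.

Lemma dotmx_self c : (c^T *m c) 0 0 = \sum_i c i 0 ^+ 2.
Proof. by rewrite dotmxE; apply: eq_bigr => i _; rewrite expr2. Qed.

Lemma dotmx_self_ge0 c : 0 <= (c^T *m c) 0 0.
Proof. by rewrite dotmx_self; apply: sumr_ge0 => i _; apply: sqr_ge0. Qed.

Lemma dotmx_self_eq0 c : ((c^T *m c) 0 0 == 0) = (c == 0).
Proof.
rewrite dotmx_self psumr_eq0; last by move=> i _; apply: sqr_ge0.
apply/allP/eqP => [c0|-> i _]; last by rewrite mxE expr0n eqxx.
apply/matrixP => i j; rewrite (ord1 j) !mxE.
by apply/eqP; rewrite -sqrf_eq0; apply: (implyP (c0 i _)); rewrite ?mem_index_enum.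
Qed.

Lemma quadmxZ A a c :
  ((a *: c)^T *m A *m (a *: c)) 0 0 = a ^+ 2 * (c^T *m A *m c) 0 0.
Proof. by rewrite !linearZ /= -!scalemxAl scalerA !mxE expr2. Qed.

Lemma quadmxDsc A a c :
  (c^T *m (A + a%:M) *m c) 0 0 = (c^T *m A *m c) 0 0 + a * (c^T *m c) 0 0.
Proof. by rewrite mulmxDr mulmxDl mul_mx_scalar -scalemxAl !mxE. Qed.

Lemma psdmxDsc A a : psdmx A -> 0 <= a -> psdmx (A + a%:M).
Proof.
by move=> Apsd a0 y; rewrite quadmxDsc addr_ge0 ?mulr_ge0 ?dotmx_self_ge0.
Qed.

Lemma psdmxDsc_unit A a : psdmx A -> 0 < a -> A + a%:M \in unitmx.
Proof.
move=> Apsd a0; rewrite unitmxE unitfE; apply/det0P => -[v /negP v0 vA].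
apply: v0; rewrite -trmx_eq0 -dotmx_self_eq0 trmxK.
have := quadmxDsc A a v^T; rewrite trmxK vA mul0mx mxE.
have := Apsd v^T; have := dotmx_self_ge0 v^T; rewrite trmxK.
by rewrite eq_le => vv0 vAv0 e; rewrite vv0 andbT -(pmulr_rle0 _ a0); lra.
Qed.

(* Completing the square: [b^T A^-1 b - (2 c^T b - c^T A c)] is the
   quadratic form of [A] at [A^-1 b - c]. *)
Lemma quad_invmx_ge A b c : A^T = A -> A \in unitmx -> psdmx A ->
  2 * (c^T *m b) 0 0 - (c^T *m A *m c) 0 0 <= (b^T *m invmx A *m b) 0 0.
Proof.
move=> Asym Aunit Apsd; have := Apsd (invmx A *m b - c).
rewrite [(_ - _)^T]linearB /= trmx_mul trmx_inv Asym.
rewrite mulmxBl mulmxBr !mulmxBl -[_ *m invmx A *m A]mulmxA mulVmx // mulmx1.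
rewrite -[c^T *m A *m (_ *m b)]mulmxA mulKVmx // mulmxA.
have := dotmxC b c; set bc := b^T *m c; set cb := c^T *m b.
set bAb := b^T *m _ *m b; set cAc := c^T *m A *m c.
by rewrite !mxE => ->; lra.
Qed.

End QuadraticForms.

Section SignVector.
Variables (R : realFieldType) (n : nat) (B : {set 'I_n}) (b : 'cV[R]_n).

Definition sgvec_on : 'cV[R]_n := \col_i (if i \in B then Num.sg (b i 0) else 0).

Lemma sgvec_on_dot : (sgvec_on^T *m b) 0 0 = \sum_(i in B) `|b i 0|.
Proof.
rewrite dotmxE [RHS]big_mkcond; apply: eq_bigr => i _ /=; rewrite mxE.
by case: ifP => _; rewrite ?mul0r // normrEsg.
Qed.

Lemma sgvec_on_norm : (sgvec_on^T *m sgvec_on) 0 0 <= #|B|%:R.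
Proof.
rewrite dotmx_self -sum1_card natr_sum [X in _ <= X]big_mkcond /=.
apply: ler_sum => i _; rewrite mxE; case: ifP => _; last by rewrite expr0n.
by rewrite sqr_sg; case: (_ != 0).
Qed.

Lemma sgvec_on_quad (G : 'M[R]_n) (kappa : R) : 0 <= kappa ->
    (forall i j, i \in B -> j \in B -> `|G i j| <= kappa) ->
  (sgvec_on^T *m G *m sgvec_on) 0 0 <= #|B|%:R ^+ 2 * kappa.
Proof.
move=> kappa0 Gkappa.
have -> : #|B|%:R ^+ 2 * kappa = \sum_(j in B) \sum_(i in B) kappa.
  by rewrite !sumr_const -mulrnA -[kappa *+ _]mulr_natl natrM expr2.
have sg_le1 (v : R) : `|Num.sg v| <= 1 by rewrite normr_sg; case: (_ != 0).
rewrite quadmxE [X in _ <= X]big_mkcond; apply: ler_sum => j _ /=.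
case jB: (j \in B); last by rewrite big1 // => i _; rewrite !mxE jB mulr0.
rewrite [X in _ <= X]big_mkcond; apply: ler_sum => i _ /=.
rewrite !mxE jB; case: ifP => iB; rewrite ?mul0r //.
apply: le_trans (ler_norm _) _; rewrite -[kappa]mul1r -[1 * kappa]mulr1 !normrM.
by apply: ler_pM; rewrite ?mulr_ge0 //; apply: ler_pM; rewrite ?Gkappa.
Qed.

End SignVector.

(* Test [c = t * sgvec_on B b] in [quad_invmx_ge], with the optimal [t = m / D]. *)
Lemma quad_invmxDsc_ge (R : realFieldType) (n : nat) (G : 'M[R]_n) (a : R)
    (b : 'cV[R]_n) (B : {set 'I_n}) (kappa m : R) :
    G^T = G -> psdmx G -> 0 < a -> 0 <= kappa -> 0 <= m ->
    (forall i j, i \in B -> j \in B -> `|G i j| <= kappa) ->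
    (forall i, i \in B -> m <= `|b i 0|) ->
  #|B|%:R * m ^+ 2 / (#|B|%:R * kappa + a) <= (b^T *m invmx (G + a%:M) *m b) 0 0.
Proof.
move=> Gsym Gpsd a_gt0 kappa0 m0 Gkappa bm.
set M : R := #|B|%:R; set D := M * kappa + a; set s := sgvec_on B b.
have D_gt0 : 0 < D by rewrite ltr_wpDl ?mulr_ge0.
have t0 : 0 <= m / D by rewrite divr_ge0 // ltW.
have Asym : (G + a%:M)^T = G + a%:M by rewrite linearD /= Gsym tr_scalar_mx.
have := quad_invmx_ge b ((m / D) *: s) Asym (psdmxDsc_unit Gpsd a_gt0)
  (psdmxDsc Gpsd (ltW a_gt0)).
rewrite quadmxZ quadmxDsc [(_ *: s)^T]linearZ /= -scalemxAl mxE.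
have sb : M * m <= (s^T *m b) 0 0.
  by rewrite sgvec_on_dot mulr_natl -sumr_const; apply: ler_sum.
have sGs := sgvec_on_quad b kappa0 Gkappa.
have ss := sgvec_on_norm B b; rewrite -/s in sGs ss.
have h1 : 2 * (m / D) * (M * m) <= 2 * (m / D) * (s^T *m b) 0 0.
  by apply: ler_wpM2l; rewrite // mulr_ge0 ?ler0n.
have h2 : (m / D) ^+ 2 * ((s^T *m G *m s) 0 0 + a * (s^T *m s) 0 0)
    <= (m / D) ^+ 2 * (M * D).
  apply: ler_wpM2l; first exact: sqr_ge0.
  rewrite /D mulrDr mulrA -expr2 [M * a]mulrC.
  by apply: lerD; [exact: sGs | apply: ler_wpM2l; [exact: ltW | exact: ss]].
have opt : 2 * (m / D) * (M * m) - (m / D) ^+ 2 * (M * D) = M * m ^+ 2 / D.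
  by field; rewrite lt0r_neq0.
lra.
Qed.

Lemma seq_min_ge0 (R : rcfType) (s : seq R) :
  (forall v, v \in s -> 0 <= v) -> 0 <= seq_min s.
Proof.
move=> s_ge0; rewrite /seq_min big_seq; apply: le_bigmin => [|v /s_ge0 //].
by case: s s_ge0 => [|v s] s_ge0 //=; apply: s_ge0; rewrite mem_head.
Qed.

Section Kernel.
Variables (R : rcfType) (d : nat) (k : 'rV[R]_d -> 'rV[R]_d -> R).
Hypotheses (ksym : kernel_symmetric k) (kpsd : kernel_psd k).

Lemma trmx_gram m (X : 'I_m -> 'rV[R]_d) : (gram k X)^T = gram k X.
Proof. by apply/matrixP => i j; rewrite !mxE ksym. Qed.

(* Positivity of the Gram matrix of [p; q] at the vectors [(1, 1)] and [(1, -1)]. *)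
Lemma kernel_norm_le p q : 2 * `|k p q| <= k p p + k q q.
Proof.
have quad2 (s : R) : 0 <= k p p + s * (k p q + k q p) + s ^+ 2 * k q q.
  pose X2 (l : 'I_2) := if l == ord0 then p else q.
  have := kpsd X2 (\col_l (if l == ord0 then 1 else s)).
  rewrite quadmxE !big_ord_recl !big_ord0 !mxE /X2 /=.
  set kpp := k p p; set kpq := k p q; set kqp := k q p; set kqq := k q q.
  by move=> h; rewrite expr2; lra.
have := quad2 1; have := quad2 (-1); rewrite (ksym q p).
by case: (lerP 0 (k p q)) => h; [rewrite ger0_norm | rewrite ltr0_norm]; lra.
Qed.

Context {N : nat} {X : 'I_N -> 'rV[R]_d} {x : 'rV[R]_d} {rho : R}.
Local Notation B := (ball_idx X x rho).

Lemma ball_kmax_ge i j : i \in B -> j \in B -> k (X i) (X j) <= ball_kmax k X x rho.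
Proof.
move=> iB jB; apply: (le_bigmax_seq _ _ predT id) => //.
by apply: (allpairs_f (fun i j => k (X i) (X j))); rewrite mem_enum.
Qed.

Lemma ball_kmax_norm_ge i j :
  i \in B -> j \in B -> `|k (X i) (X j)| <= ball_kmax k X x rho.
Proof.
move=> iB jB; have := kernel_norm_le (X i) (X j).
have := ball_kmax_ge iB iB; have := ball_kmax_ge jB jB; lra.
Qed.

Lemma ball_kmin_sq_le i : i \in B -> ball_kmin_sq k X x rho <= k (X i) x ^+ 2.
Proof.
move=> iB; apply: (ge_bigmin_seq _ _ predT id) => //.
by apply: (map_f (fun i => k (X i) x ^+ 2)); rewrite mem_enum.
Qed.

Lemma ball_kmin_sq_ge0 : 0 <= ball_kmin_sq k X x rho.
Proof. by apply: seq_min_ge0 => _ /mapP[i _ ->]; apply: sqr_ge0. Qed.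

End Kernel.

Theorem mainTheorem10 (R : rcfType) (d : nat) (k : 'rV[R]_d -> 'rV[R]_d -> R)
  (sn2 : R) (N : nat) (X : 'I_N -> 'rV[R]_d) (x : 'rV[R]_d) (rho : R) :
  kernel_symmetric k -> kernel_psd k -> 0 < sn2 -> 0 < rho ->
  (1 <= #|ball_idx X x rho|)%N ->
  post_var k sn2 X x <=
    (k x x * sn2 + (#|ball_idx X x rho|)%:R * xi k X x rho) /
    ((#|ball_idx X x rho|)%:R * ball_kmax k X x rho + sn2).
Proof.
move=> ksym kpsd sn2_gt0 _ /card_gt0P[i0 i0B].
set kmax := ball_kmax k X x rho; set kmin := ball_kmin_sq k X x rho.
have kmax_ge0 : 0 <= kmax.
  exact: le_trans (normr_ge0 _) (ball_kmax_norm_ge ksym kpsd i0B i0B).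
have kmin_ge0 : 0 <= kmin by apply: ball_kmin_sq_ge0.
have sqrt_kmin_le i : i \in ball_idx X x rho -> Num.sqrt kmin <= `|kvec k X x i 0|.
  by move=> iB; rewrite mxE ksym -sqrtr_sqr ler_sqrt ?sqr_ge0 ?ball_kmin_sq_le.
have gram_le_kmax i j :
    i \in ball_idx X x rho -> j \in ball_idx X x rho -> `|gram k X i j| <= kmax.
  by rewrite mxE; apply: ball_kmax_norm_ge.
have := quad_invmxDsc_ge (trmx_gram ksym X) (kpsd N X) sn2_gt0
  kmax_ge0 (sqrtr_ge0 kmin) gram_le_kmax sqrt_kmin_le.
rewrite sqr_sqrtr // /post_var /xi -/kmax -/kmin.
set M : R := #|_|%:R.
have D_gt0 : 0 < M * kmax + sn2 by rewrite ltr_wpDl ?mulr_ge0.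
have -> : (k x x * sn2 + M * (k x x * kmax - kmin)) / (M * kmax + sn2)
    = k x x - M * kmin / (M * kmax + sn2) by field; rewrite lt0r_neq0.
lra.
Qed.
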